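(* (a) Let $x\in P$ and $(y,v')\in\mathcal{P}$ with $x\neq y$ and $v'\notin x'^{\perp}$ in $S'$. Then $d(x,(y,v'))=3$ in $\mathbb{S}$. (b) Let $u'\in P'$ and $(y,v')\in\mathcal{P}$ with $u'\neq v'$ and $y\notin u^{\perp}$ in $S$. Then $d(u',(y,v'))=3$ in $\mathbb{S}$.
   Context: Let $S=(P,L)$ and $S'=(P',L')$ be generalized quadrangles of order $(2,2)$ (every line has 3 points, every point lies on 3 lines, and for each point $x$ and line $l\not\ni x$ exactly one point of $l$ is collinear with $x$), with an isomorphism $x\mapsto x'$ from $S$ to $S'$ (write $u$ for the preimage of $u'\in P'$). In a point-line geometry, $x^{\perp}$ is $x$ together with all points collinear with $x$, and $A^{\perp}=\bigcap_{a\in A}a^{\perp}$. A triad is a set of three pairwise non-collinear points, complete if $|T^{\perp}|=3$. Let $\mathcal{P}=\{(x,y')\in P\times P':y'\in x'^{\perp}\}$ and $\mathcal{L}$ the set of all $3$-subsets $\{(x,u'),(y,v'),(z,w')\}$ of $\mathcal{P}$ where $T=\{x,y,z\}$ (three distinct points) is a line or complete triad of $S$ and $\{u',v',w'\}=T'^{\perp}$ in $S'$ with $u',v',w'$ distinct. The geometry $\mathbb{S}=(\mathbb{P},\mathbb{L})$ has point set $\mathbb{P}=\mathcal{P}\cup P\cup P'$ (disjoint union) and line set $\mathcal{L}\cup\{\{x,(x,u'),u'\}:(x,u')\in\mathcal{P}\}$. Distance $d$ is in the collinearity graph of $\mathbb{S}$. *)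

From mathcomp Require Import all_boot.
Set Implicit Arguments. Unset Strict Implicit. Unset Printing Implicit Defensive.

Definition collinear (T : finType) (L : {set {set T}}) (x y : T) : bool :=
  (x != y) && [exists l in L, (x \in l) && (y \in l)].

Definition perp (T : finType) (L : {set {set T}}) (x : T) : {set T} :=
  [set y | (y == x) || collinear L x y].

Definition perpS (T : finType) (L : {set {set T}}) (A : {set T}) : {set T} :=
  \bigcap_(a in A) perp L a.

Definition is_GQ22 (T : finType) (L : {set {set T}}) : Prop :=
  [/\ (forall l, l \in L -> #|l| = 3),
      (forall x : T, #|[set l in L | x \in l]| = 3)
    & (forall (x : T) l, l \in L -> x \notin l ->
         #|[set y in l | collinear L x y]| = 1)].

Definition triad (T : finType) (L : {set {set T}}) (A : {set T}) : bool :=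
  (#|A| == 3) && [forall x in A, forall y in A, ~~ collinear L x y].

Definition complete_triad (T : finType) (L : {set {set T}}) (A : {set T}) : bool :=
  triad L A && (#|perpS L A| == 3).

Definition BPt (P P' : finType) : finType := ((P + P') + (P * P'))%type.

(* the set calP = {(x,y') | y' in x'^perp} *)
Definition calP (P P' : finType) (L' : {set {set P'}}) (f : P -> P')
  : {set P * P'} := [set p | p.2 \in perp L' (f p.1)].

Definition calL (P P' : finType) (L : {set {set P}}) (L' : {set {set P'}})
  (f : P -> P') : {set {set P * P'}} :=
  [set B : {set P * P'} |
     [&& #|B| == 3, B \subset calP L' f,
         #|[set p.1 | p in B]| == 3,
         ([set p.1 | p in B] \in L) || complete_triad L [set p.1 | p in B],
         [set p.2 | p in B] == perpS L' (f @: [set p.1 | p in B])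
       & #|[set p.2 | p in B]| == 3]].

Definition bigL (P P' : finType) (L : {set {set P}}) (L' : {set {set P'}})
  (f : P -> P') : {set {set BPt P P'}} :=
  [set (@inr (P + P') (P * P')) @: B | B : {set P * P'} in calL L L' f]
  :|: [set [set (inl (inl p.1) : BPt P P'); inr p; inl (inr p.2)] | p in calP L' f].

Definition dist_is (T : finType) (e : rel T) (a b : T) (n : nat) : Prop :=
  (exists s : seq T, [/\ size s = n, path e a s & last a s = b]) /\
  (forall s : seq T, size s < n -> path e a s -> last a s != b).

From mathcomp Require Import all_boot.
Set Implicit Arguments. Unset Strict Implicit. Unset Printing Implicit Defensive.

(* Upper bounds: in a generalized quadrangle any two points have a common
   neighbour, which yields paths x, u', y, (y,v') and u', t, v', (y,v').
   Lower bounds: the lines of calL contain pairs only, so the lines through a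
   point x of P are the {x, (x,u'), u'} with u' in x'^perp; in particular the
   only pairs collinear with x are the (x,u'), which excludes distance 1.
   A line of calL through the pair (w,u') has all its second coordinates in
   w'^perp. Hence a common neighbour of x and (y,v') forces v' in x'^perp,
   and dually a common neighbour of u' and (y,v') forces u' in y'^perp,
   i.e. y in u^perp. *)

Lemma collinearC (T : finType) (L : {set {set T}}) (x y : T) :
  collinear L x y = collinear L y x.
Proof.
rewrite /collinear eq_sym; congr (_ && _).
by apply/existsP/existsP => -[l /and3P [hl h1 h2]]; exists l; rewrite hl h1 h2.
Qed.

Lemma collinear_line (T : finType) (L : {set {set T}}) (l : {set T}) (x y : T) :
  l \in L -> x \in l -> y \in l -> x != y -> collinear L x y.
Proof. by move=> hl hx hy nxy; rewrite /collinear nxy; apply/existsP; exists l; rewrite hl hx hy. Qed.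

Lemma perpC (T : finType) (L : {set {set T}}) (x y : T) :
  (x \in perp L y) = (y \in perp L x).
Proof. by rewrite !inE eq_sym collinearC. Qed.

Lemma collinear_imset (T T' : finType) (L : {set {set T}}) (f : T -> T') (x y : T) :
  injective f -> collinear [set f @: l | l : {set T} in L] (f x) (f y) = collinear L x y.
Proof.
move=> f_inj; rewrite /collinear (inj_eq f_inj); congr (_ && _).
apply/existsP/existsP => [[_ /and3P [/imsetP [l hl ->] hx hy]] | [l /and3P [hl hx hy]]].
  by rewrite !mem_imset // in hx hy; exists l; rewrite hl hx hy.
by exists (f @: l); rewrite (imset_f (fun m : {set T} => f @: m)) // !imset_f.
Qed.

Lemma perp_imset (T T' : finType) (L : {set {set T}}) (f : T -> T') (x y : T) :
  injective f -> (f x \in perp [set f @: l | l : {set T} in L] (f y)) = (x \in perp L y).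
Proof. by move=> f_inj; rewrite !inE (inj_eq f_inj) collinear_imset. Qed.

Lemma GQ22_common_perp (T : finType) (L : {set {set T}}) (a b : T) :
  is_GQ22 L -> a != b -> exists2 c, c \in perp L a & c \in perp L b.
Proof.
case=> _ lines_on_point unique_collinear nab.
have [cab | ncab] := boolP (collinear L a b).
  by exists a; rewrite !inE ?eqxx // collinearC cab orbT.
have /card_gt0P [l] : 0 < #|[set l in L | b \in l]| by rewrite lines_on_point.
rewrite inE => /andP [hl hb].
have anl : a \notin l by apply: contra ncab => ha; apply: collinear_line hl ha hb nab.
have /card_gt0P [c] : 0 < #|[set y in l | collinear L a y]| by rewrite unique_collinear.
rewrite inE => /andP [hc cac]; exists c; first by rewrite inE cac orbT.
rewrite inE; have [// | ncb] := eqVneq c b.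
by rewrite (collinear_line hl hb hc) ?orbT // eq_sym.
Qed.

Section BigGeometry.

Variables (P P' : finType) (L : {set {set P}}) (L' : {set {set P'}}) (f : P -> P').

Local Notation coll := (collinear (bigL L L' f)).

Lemma collinear_special_line (w : P) (u' : P') : u' \in perp L' (f w) ->
  [/\ coll (inl (inl w)) (inr (w, u')), coll (inl (inr u')) (inr (w, u'))
    & coll (inl (inl w)) (inl (inr u'))].
Proof.
move=> wu.
have hl : [set (inl (inl w) : BPt P P'); inr (w, u'); inl (inr u')] \in bigL L L' f.
  by apply/setUP; right; apply/imsetP; exists (w, u'); first rewrite inE.
by split; apply: (collinear_line hl); rewrite ?inE ?eqxx ?orbT.
Qed.

Lemma collinear_point_pair (a : P + P') (q : P * P') :
  coll (inl a) (inr q) -> a = inl q.1 \/ a = inr q.2.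
Proof.
case/andP => _ /existsP [l /and3P [/setUP [] /imsetP [B _ ->] ha hq]].
  by case/imsetP: ha.
move: ha hq; rewrite !inE => /orP [/orP [/eqP [->] | //] | /eqP [->]];
  case/orP => [/orP [// | /eqP [->]] | //]; by [left | right].
Qed.

Lemma collinear_pairs (p q : P * P') : coll (inr p) (inr q) -> q.2 \in perp L' (f p.1).
Proof.
case/andP => npq /existsP [l /and3P [/setUP [] /imsetP [B hB ->] hp hq]]; last first.
  move: hp hq npq; rewrite !inE => /orP [/orP [// | /eqP [->]] | //].
  by case/orP => [/orP [// | /eqP [->]] | //]; rewrite eqxx.
case/imsetP: hp => {npq}p hp [->]; case/imsetP: hq => {}q hq [->].
move: hB; rewrite inE => /and5P [_ _ _ _ /andP [/eqP B2 _]].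
have : q.2 \in [set r.2 | r in B] by apply: imset_f.
by rewrite B2 => /bigcapP; apply; rewrite imset_f ?imset_f.
Qed.

Lemma neighbour_point (x : P) (z : BPt P P') : coll (inl (inl x)) z ->
  exists2 u', u' \in perp L' (f x) & z = inr (x, u') \/ z = inl (inr u').
Proof.
case/andP => nxz /existsP [l /and3P [/setUP [] /imsetP [B hB ->] hx hz]].
  by case/imsetP: hx.
move: hB hx hz nxz; rewrite !inE => hB /orP [/orP [/eqP [->] | //] | //].
case/orP => [/orP [] | ] /eqP ->; first by rewrite eqxx.
  by exists B.2; [rewrite inE | left; case: (B)].
by exists B.2; [rewrite inE | right].
Qed.

Lemma neighbour_point' (u' : P') (z : BPt P P') : coll (inl (inr u')) z ->
  exists2 w, u' \in perp L' (f w) & z = inr (w, u') \/ z = inl (inl w).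
Proof.
case/andP => nuz /existsP [l /and3P [/setUP [] /imsetP [B hB ->] hu hz]].
  by case/imsetP: hu.
move: hB hu hz nuz; rewrite !inE => hB /orP [// | /eqP [->]].
case/orP => [/orP [] | ] /eqP ->; last by rewrite eqxx.
  by exists B.1; [rewrite inE | right].
by exists B.1; [rewrite inE | left; case: (B)].
Qed.

Lemma common_neighbour_point_pair (x : P) (q : P * P') (z : BPt P P') :
  coll (inl (inl x)) z -> coll z (inr q) -> q.2 \in perp L' (f x).
Proof.
case/neighbour_point => u' hu [] ->; first by move/collinear_pairs.
by case/collinear_point_pair => // -[<-].
Qed.

Lemma common_neighbour_point'_pair (u' : P') (q : P * P') (z : BPt P P') :
  coll (inl (inr u')) z -> coll z (inr q) -> u' \in perp L' (f q.1).
Proof.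
case/neighbour_point' => w hu [] ->; first by rewrite collinearC => /collinear_pairs.
by case/collinear_point_pair => // -[<-].
Qed.

End BigGeometry.

Lemma dist_is_3 (T : finType) (e : rel T) (a b c d : T) :
  e a b -> e b c -> e c d -> a != d -> ~~ e a d ->
  (forall z, e a z -> e z d -> False) -> dist_is e a d 3.
Proof.
move=> ab bc cd nad nead no_common; split; first by exists [:: b; c; d]; rewrite /= ab bc cd.
case=> [| z [| z' [| ? ?]]] //= _.
  by rewrite andbT => az; apply/eqP => zd; rewrite -zd az in nead.
by case/and3P => az zz' _; apply/eqP => zd; apply: (no_common z az); rewrite -zd.
Qed.

Theorem lemma4p4 (P P' : finType) (L : {set {set P}}) (L' : {set {set P'}})
  (f : P -> P') (g : P' -> P) :
  is_GQ22 L -> is_GQ22 L' ->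
  cancel f g -> cancel g f -> L' = [set f @: l | l : {set P} in L] ->
  (forall (x y : P) (v' : P'), (y, v') \in calP L' f -> x != y ->
     v' \notin perp L' (f x) ->
     dist_is (collinear (bigL L L' f)) (inl (inl x)) (inr (y, v')) 3) /\
  (forall (u' : P') (y : P) (v' : P'), (y, v') \in calP L' f -> u' != v' ->
     y \notin perp L (g u') ->
     dist_is (collinear (bigL L L' f)) (inl (inr u')) (inr (y, v')) 3).
Proof.
move=> _ gq' fK gK EL; split.
- move=> x y v' yv nxy nv.
  have {}yv : v' \in perp L' (f y) by rewrite inE in yv.
  have /(GQ22_common_perp gq') [u' xu yu] : f x != f y by rewrite (inj_eq (can_inj fK)).
  have [_ _ x_u] := collinear_special_line L xu.
  have [_ _ y_u] := collinear_special_line L yu.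
  have [y_yv _ _] := collinear_special_line L yv.
  apply: (dist_is_3 x_u _ y_yv) => //.
  + by rewrite collinearC.
  + by apply/negP; case/collinear_point_pair => [[xy] | //]; rewrite xy eqxx in nxy.
  + by move=> z xz zyv; move: nv; rewrite (common_neighbour_point_pair xz zyv).
- move=> u' y v' yv nuv ny.
  have {}yv : v' \in perp L' (f y) by rewrite inE in yv.
  have [t' ut vt] := GQ22_common_perp gq' nuv.
  have tu : u' \in perp L' (f (g t')) by rewrite gK perpC.
  have tv : v' \in perp L' (f (g t')) by rewrite gK perpC.
  have [_ _ t_u] := collinear_special_line L tu.
  have [_ _ t_v] := collinear_special_line L tv.
  have [_ v_yv _] := collinear_special_line L yv.
  apply: (dist_is_3 _ t_v v_yv) => //.
  + by rewrite collinearC.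
  + by apply/negP; case/collinear_point_pair => [// | [uv]]; rewrite uv eqxx in nuv.
  + move=> z uz zyv; have := common_neighbour_point'_pair uz zyv.
    rewrite -[u' in u' \in _]gK EL perp_imset /=; last exact: can_inj fK.
    by rewrite perpC (negbTE ny).
Qed.
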